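(* For every $n\geq 0$, $$\sum_{m=0}^{2^{n}-1}x^{e(2m+1)}=H_{n+1}(x)-xH_n(x),$$ and consequently, for all integers $i,n\geq 0$ (with $e(-1,n):=0$), $$|\{m\in[0,2^{n}-1]\cap\mathbb{Z}:\;e(2m+1)=i\}|=e(i,n+1)-e(i-1,n).$$
   Context: The Stern polynomials $B_n(t)\in\mathbb{Z}[t]$ are defined by $B_0(t)=0$, $B_1(t)=1$, and for $n\geq 1$: $B_{2n}(t)=tB_n(t)$, $B_{2n+1}(t)=B_n(t)+B_{n+1}(t)$. For $n\geq1$ let $e(n)=\deg B_n(t)$. For $n\geq 0$ let $H_n(x)=\sum_{m=1}^{2^n}x^{e(m)}$, and for $i,n\geq 0$ let $e(i,n)=|\{m\in[1,2^n]\cap\mathbb{Z}:\;e(m)=i\}|$. *)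

From HB Require Import structures.
From mathcomp Require Import all_boot all_order all_algebra.
Set Implicit Arguments. Unset Strict Implicit. Unset Printing Implicit Defensive.
Import GRing.Theory.
Local Open Scope ring_scope.

(* Stern polynomials, computed with fuel k (fuel n suffices for B_n). *)
Fixpoint sternF (k n : nat) : {poly int} :=
  match k with
  | 0 => 0
  | k'.+1 =>
    if n == 0%N then 0
    else if n == 1%N then 1
    else if odd n then sternF k' n./2 + sternF k' (n./2).+1
    else 'X * sternF k' n./2
  end.

Definition stern (n : nat) : {poly int} := sternF n n.

Definition e (n : nat) : nat := (size (stern n)).-1.

Definition H (n : nat) : {poly int} := \sum_(1 <= m < (2 ^ n).+1) 'X^(e m).

Definition ecount (i n : nat) : nat := count (fun m => e m == i) (iota 1 (2 ^ n)).

From HB Require Import structures.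
From mathcomp Require Import all_boot all_order all_algebra.
From mathcomp Require Import zify.
Import Order.TTheory GRing.Theory Num.Theory.
Local Open Scope ring_scope.

(* The only arithmetic fact about Stern polynomials that is needed is the
   degree recursion e(2k) = e(k) + 1 for k >= 1.  It follows from
   B_{2k} = t B_k together with B_k <> 0, and the latter holds because B_k
   takes positive values at positive integers.  Since [stern] is computed
   with fuel, we first show that any sufficient amount of fuel gives the
   same polynomial.
   Splitting the range [1, 2^(n+1)] into odd and even indices gives
     H_{n+1}(x) = sum_{m < 2^n} x^{e(2m+1)} + sum_{k=1}^{2^n} x^{e(2k)}
                = sum_{m < 2^n} x^{e(2m+1)} + x H_n(x),
   which is the first claim.  The counting identity is its coefficient of
   x^i, because the coefficient of x^i in a sum of monomials x^{a(m)} is the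
   number of indices m with a(m) = i. *)

Lemma sternF_step k n : sternF k.+1 n =
  if n == 0%N then 0 else if n == 1%N then 1
  else if odd n then sternF k n./2 + sternF k (n./2).+1
  else 'X * sternF k n./2.
Proof. by []. Qed.

Lemma sternF_fuel k1 k2 n :
  (n <= k1)%N -> (n <= k2)%N -> sternF k1 n = sternF k2 n.
Proof.
elim: k1 k2 n => [|k1 IH] [|k2] n /= h1 h2.
- by [].
- by move: h1; rewrite leqn0 => /eqP ->.
- by move: h2; rewrite leqn0 => /eqP ->.
case: eqP => // /eqP n0; case: eqP => // /eqP n1.
case: ifP => n_odd; first by rewrite (IH k2 n./2) ?(IH k2 (n./2).+1) //; lia.
by rewrite (IH k2 n./2) //; lia.
Qed.

Lemma sternF_pos k n (x : int) :
  (1 <= n <= k)%N -> 0 < x -> 0 < (sternF k n).[x].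
Proof.
elim: k n => [|k IH] n /= hn hx; first by lia.
case: eqP => [n0|/eqP n0]; first by lia.
case: eqP => [_|/eqP n1]; first by rewrite hornerC.
case: ifP => n_odd; first by rewrite hornerD addr_gt0 // IH //; lia.
by rewrite mulrC hornerMX mulr_gt0 // IH //; lia.
Qed.

Lemma stern_neq0 n : (1 <= n)%N -> stern n != 0.
Proof.
move=> n_gt0; apply/eqP => Bn0.
have := @sternF_pos n n 1 _ ltr01.
by rewrite -/(stern n) Bn0 horner0 ltxx n_gt0 leqnn => /(_ isT).
Qed.

Lemma stern_double k : (1 <= k)%N -> stern k.*2 = 'X * stern k.
Proof.
move=> k_gt0; rewrite /stern.
case E: k.*2 => [|m]; first by lia.
rewrite sternF_step -E !ifF ?odd_double //; [|lia|lia].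
by rewrite doubleK (@sternF_fuel m k) //; lia.
Qed.

Lemma e_double k : (1 <= k)%N -> e k.*2 = (e k).+1.
Proof.
move=> k_gt0; rewrite /e stern_double // mulrC size_mulX ?stern_neq0 //.
by move: (stern_neq0 k k_gt0); rewrite -size_poly_eq0; case: size.
Qed.

Lemma sum_odd_even (V : nmodType) (f : nat -> V) N :
  \sum_(1 <= m < (N.*2).+1) f m =
  \sum_(0 <= k < N) (f (2 * k).+1 + f (2 * k).+2).
Proof.
elim: N => [|N IH]; first by rewrite !big_geq.
rewrite doubleS big_nat_recr // big_nat_recr //= IH.
by rewrite big_nat_recr //= -addrA -mul2n.
Qed.

Lemma coef_sum_monomials (R : nzRingType) (a : nat -> nat) (s : seq nat) i :
  (\sum_(m <- s) ('X^(a m) : {poly R}))`_i = (count (fun m => a m == i) s)%:R.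
Proof.
elim: s => [|x s IH]; first by rewrite big_nil coef0.
by rewrite big_cons coefD IH coefXn /= natrD eq_sym; case: eqP.
Qed.

Lemma odd_generating_function n :
  \sum_(0 <= m < 2 ^ n) 'X^(e (2 * m).+1) = H n.+1 - 'X * H n.
Proof.
have even_part : \sum_(0 <= k < 2 ^ n) ('X^(e (2 * k).+2) : {poly int}) = 'X * H n.
  rewrite /H big_add1 /= mulr_sumr; apply: eq_bigr => k _.
  by rewrite (_ : (2 * k).+2 = k.+1.*2) ?e_double ?exprS //; lia.
by rewrite /H expnS mul2n sum_odd_even big_split /= -/(H n) even_part addrK.
Qed.

Lemma H_seq n : H n = \sum_(m <- iota 1 (2 ^ n)) 'X^(e m).
Proof. by rewrite /H /index_iota subSS subn0. Qed.

Theorem mainTheorem4 :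
  (forall n : nat,
     \sum_(0 <= m < 2 ^ n) 'X^(e (2 * m).+1) = H n.+1 - 'X * H n)
  /\
  (forall i n : nat,
     ((count (fun m => e (2 * m).+1 == i) (iota 0 (2 ^ n)))%:Z : int)
     = (ecount i n.+1)%:Z - (match i with 0 => 0%N | i'.+1 => ecount i' n end)%:Z).
Proof.
split; first exact: odd_generating_function.
move=> i n.
have := congr1 (fun p : {poly int} => p`_i) (odd_generating_function n).
rewrite /= coefB coefXM !H_seq /index_iota subn0 !coef_sum_monomials -!natz => ->.
by case: i.
Qed.
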